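(* Let $X,Y$ be metric spaces with bounded geometry, and equip $X\times Y$ with the $\ell^\infty$ product metric. For every $q,q'\geq 1$, $\mathrm{TO}^{q+q'}_{X\times Y}(r) \lesssim \mathrm{TO}^q_X(r)\,\mathrm{TO}^{q'}_Y(r)$.
   Context: A metric space has bounded geometry if for every $R\ge r>0$ there is $C(R,r)$ such that every ball of radius $R$ is covered by $C(R,r)$ balls of radius $r$. For $Z\subseteq X$, $\mathrm{Cov}^1(Z)$ is the minimal number of closed balls of radius $1$ in $X$ covering $Z$ ($+\infty$ if none). For $Z$ with $\mathrm{Cov}^1(Z)<\infty$ and continuous $f:Z\to\mathbb R^q$, $\mathrm{Ov}(f)=\sup_{z}\mathrm{Cov}^1(f^{-1}(z))$, $\mathrm{TO}^q(Z)=\min_f\mathrm{Ov}(f)$, $\mathrm{TO}^q_X(r)=\max\{\mathrm{TO}^q(Z): Z\subseteq X,\mathrm{Cov}^1(Z)\le r\}$. $f\lesssim g$ means there is $C$ with $f(r)\le Cg(Cr)+C$ for all $r$. (The paper notes that changing to any $\ell^p$ product metric does not change $\mathrm{TO}$ up to $\simeq$.) *)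

From Stdlib Require Import Reals List ClassicalEpsilon.
Open Scope R_scope.

(* The least natural number satisfying P (arbitrary if none exists). *)
Definition nat_min (P : nat -> Prop) : nat :=
  epsilon (inhabits 0%nat) (fun n => P n /\ forall m, P m -> (n <= m)%nat).

(* The least upper bound (= max when attained) of the set P of naturals
   (arbitrary if P is unbounded). *)
Definition nat_sup (P : nat -> Prop) : nat :=
  nat_min (fun k => forall m, P m -> (m <= k)%nat).

Definition is_metric {T : Type} (d : T -> T -> R) : Prop :=
  (forall x y, 0 <= d x y) /\
  (forall x y, d x y = 0 <-> x = y) /\
  (forall x y, d x y = d y x) /\
  (forall x y z, d x z <= d x y + d y z).

Definition cball {T : Type} (d : T -> T -> R) (c : T) (r : R) (x : T) : Prop :=
  d c x <= r.

Definition covered_by {T : Type} (d : T -> T -> R) (r : R) (Z : T -> Prop) (n : nat) : Prop :=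
  exists cs : list T, (length cs <= n)%nat /\
    forall z, Z z -> exists c, In c cs /\ cball d c r z.

Definition bounded_geometry {T : Type} (d : T -> T -> R) : Prop :=
  forall Rad r : R, 0 < r -> r <= Rad ->
    exists C : nat, forall x : T, covered_by d r (cball d x Rad) C.

Definition prod_dist {X Y : Type} (dX : X -> X -> R) (dY : Y -> Y -> R)
  (p p' : X * Y) : R := Rmax (dX (fst p) (fst p')) (dY (snd p) (snd p')).

Definition Rvec (q : nat) : Type := {i : nat | (i < q)%nat} -> R.

(* continuity of f : Z -> R^q, Z carrying the induced metric
   (sup norm on R^q; all norms give the same topology) *)
Definition continuous_on {T : Type} (d : T -> T -> R) (Z : T -> Prop) {q : nat}
  (f : T -> Rvec q) : Prop :=
  forall x, Z x -> forall eps, 0 < eps -> exists delta, 0 < delta /\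
    forall y, Z y -> d x y < delta -> forall i, Rabs (f y i - f x i) < eps.

Definition Cov1_finite {T : Type} (d : T -> T -> R) (Z : T -> Prop) : Prop :=
  exists n, covered_by d 1 Z n.

(* Cov^1(Z): minimal number of closed radius-1 balls covering Z
   (only meaningful when Cov1_finite d Z). *)
Definition Cov1 {T : Type} (d : T -> T -> R) (Z : T -> Prop) : nat :=
  nat_min (covered_by d 1 Z).

Definition fibre {T : Type} (Z : T -> Prop) {q : nat} (f : T -> Rvec q) (z : Rvec q)
  (x : T) : Prop := Z x /\ f x = z.

Definition Ov {T : Type} (d : T -> T -> R) (Z : T -> Prop) {q : nat} (f : T -> Rvec q) : nat :=
  nat_sup (fun m => exists z : Rvec q, m = Cov1 d (fibre Z f z)).

Definition TO {T : Type} (d : T -> T -> R) (q : nat) (Z : T -> Prop) : nat :=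
  nat_min (fun k => exists f : T -> Rvec q, continuous_on d Z f /\ Ov d Z f = k).

Definition TOX {T : Type} (d : T -> T -> R) (q : nat) (r : nat) : nat :=
  nat_sup (fun k => exists Z : T -> Prop,
    Cov1_finite d Z /\ (Cov1 d Z <= r)%nat /\ k = TO d q Z).

(** If [Z] lies in [X * Y], its projections [A] and [B] need no more unit
    balls than [Z] (project the centres).  Given maps [f : A -> R^q] and
    [g : B -> R^q'], the map [p |-> (f p.1, g p.2)] on [Z] is continuous, and
    each of its fibres lies in a product of a fibre of [f] and a fibre of [g];
    products of unit balls are unit balls of the l^infty metric.  Hence
    [TO^(q+q')(Z) <= TO^q(A) * TO^q'(B)], so the inequality holds with
    constant 1, without using bounded geometry, the metric axioms or [q, q' >= 1]. *)

From Stdlib Require Import Reals.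
From Stdlib Require Import List ClassicalEpsilon Classical Lia Arith Wf_nat Lra FunctionalExtensionality.
Open Scope R_scope.

Lemma nat_min_spec (P : nat -> Prop) : (exists n, P n) ->
  P (nat_min P) /\ forall m, P m -> (nat_min P <= m)%nat.
Proof.
  intros HP; unfold nat_min; apply epsilon_spec.
  destruct (dec_inh_nat_subset_has_unique_least_element P (fun n => classic (P n)) HP)
    as [n [Hn _]].
  now exists n.
Qed.

Lemma nat_sup_spec (P : nat -> Prop) : (exists b, forall m, P m -> (m <= b)%nat) ->
  (forall m, P m -> (m <= nat_sup P)%nat) /\
  (forall k, (forall m, P m -> (m <= k)%nat) -> (nat_sup P <= k)%nat).
Proof. intros Hb; exact (nat_min_spec _ Hb). Qed.

Section Covering.

Variables (T : Type) (d : T -> T -> R).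

Lemma covered_by_sub r (Z W : T -> Prop) n m :
  (forall x, W x -> Z x) -> (n <= m)%nat -> covered_by d r Z n -> covered_by d r W m.
Proof.
  intros HWZ Hnm [cs [Hlen Hcs]].
  exists cs; split; [lia | intros z Hz; exact (Hcs z (HWZ z Hz))].
Qed.

Lemma Cov1_covered Z : Cov1_finite d Z -> covered_by d 1 Z (Cov1 d Z).
Proof. intros HZ; exact (proj1 (nat_min_spec _ HZ)). Qed.

Lemma Cov1_le Z n : covered_by d 1 Z n -> (Cov1 d Z <= n)%nat.
Proof. intros HZ; exact (proj2 (nat_min_spec _ (ex_intro _ n HZ)) n HZ). Qed.

Lemma Cov1_finite_sub (Z W : T -> Prop) :
  (forall x, W x -> Z x) -> Cov1_finite d Z -> Cov1_finite d W.
Proof.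
  intros HWZ [n Hn]; exists n; exact (covered_by_sub _ _ _ _ _ HWZ (le_n n) Hn).
Qed.

Lemma Cov1_fibre_le {q} Z (f : T -> Rvec q) z :
  Cov1_finite d Z -> (Cov1 d (fibre Z f z) <= Cov1 d Z)%nat.
Proof.
  intros HZ; apply Cov1_le.
  apply (covered_by_sub _ Z _ _ _ (fun x Hx => proj1 Hx) (le_n _)), Cov1_covered, HZ.
Qed.

Lemma Cov1_fibre_le_Ov {q} Z (f : T -> Rvec q) z :
  Cov1_finite d Z -> (Cov1 d (fibre Z f z) <= Ov d Z f)%nat.
Proof.
  intros HZ; apply nat_sup_spec; [| now exists z].
  exists (Cov1 d Z); intros m [z' ->]; now apply Cov1_fibre_le.
Qed.

Lemma Ov_le {q} Z (f : T -> Rvec q) k :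
  Cov1_finite d Z -> (forall z, covered_by d 1 (fibre Z f z) k) -> (Ov d Z f <= k)%nat.
Proof.
  intros HZ Hk; apply nat_sup_spec.
  - exists (Cov1 d Z); intros m [z ->]; now apply Cov1_fibre_le.
  - intros m [z ->]; apply Cov1_le, Hk.
Qed.

Lemma fibre_covered_by_Ov {q} Z (f : T -> Rvec q) z :
  Cov1_finite d Z -> covered_by d 1 (fibre Z f z) (Ov d Z f).
Proof.
  intros HZ.
  apply (covered_by_sub _ _ _ _ _ (fun x Hx => Hx) (Cov1_fibre_le_Ov Z f z HZ)).
  apply Cov1_covered, (Cov1_finite_sub Z); [intros x Hx; exact (proj1 Hx) | exact HZ].
Qed.

Lemma continuous_on_const q Z : continuous_on d Z (fun _ => (fun _ => 0) : Rvec q).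
Proof.
  intros x _ eps Heps; exists 1; split; [lra |].
  intros y _ _ i; rewrite Rminus_0_r, Rabs_R0; exact Heps.
Qed.

Lemma TO_attained q Z : exists f : T -> Rvec q, continuous_on d Z f /\ Ov d Z f = TO d q Z.
Proof.
  unfold TO; apply nat_min_spec.
  eexists; eexists; split; [apply continuous_on_const | reflexivity].
Qed.

Lemma TO_le_Ov q Z (f : T -> Rvec q) : continuous_on d Z f -> (TO d q Z <= Ov d Z f)%nat.
Proof. intros Hf; apply nat_min_spec; eauto. Qed.

Lemma TO_le_Cov1 q Z : Cov1_finite d Z -> (TO d q Z <= Cov1 d Z)%nat.
Proof.
  intros HZ; eapply Nat.le_trans; [apply TO_le_Ov, (continuous_on_const q) |].
  apply Ov_le; [exact HZ |]; intros z.
  apply (covered_by_sub _ Z _ _ _ (fun x Hx => proj1 Hx) (le_n _)), Cov1_covered, HZ.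
Qed.

Lemma TO_le_TOX q r Z :
  Cov1_finite d Z -> (Cov1 d Z <= r)%nat -> (TO d q Z <= TOX d q r)%nat.
Proof.
  intros HZ Hr; apply nat_sup_spec; [| now exists Z].
  exists r; intros m [W [HW [HWr ->]]].
  eapply Nat.le_trans; [apply TO_le_Cov1, HW | exact HWr].
Qed.

Lemma TOX_le q r k :
  (forall Z, Cov1_finite d Z -> (Cov1 d Z <= r)%nat -> (TO d q Z <= k)%nat) ->
  (TOX d q r <= k)%nat.
Proof.
  intros Hk; apply nat_sup_spec.
  - exists r; intros m [W [HW [HWr ->]]].
    eapply Nat.le_trans; [apply TO_le_Cov1, HW | exact HWr].
  - intros m [W [HW [HWr ->]]]; auto.
Qed.

End Covering.

Definition vnth {q} (v : Rvec q) (n : nat) : R :=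
  match lt_dec n q with left h => v (exist _ n h) | right _ => 0 end.

Definition vjoin {q q'} (u : Rvec q) (v : Rvec q') : Rvec (q + q') :=
  fun i => if lt_dec (proj1_sig i) q then vnth u (proj1_sig i) else vnth v (proj1_sig i - q).

Definition vfst {q q'} (w : Rvec (q + q')) : Rvec q := fun i => vnth w (proj1_sig i).

Definition vsnd {q q'} (w : Rvec (q + q')) : Rvec q' := fun i => vnth w (q + proj1_sig i).

Lemma vnth_val {q} (v : Rvec q) n (h : (n < q)%nat) : vnth v n = v (exist _ n h).
Proof.
  unfold vnth; destruct (lt_dec n q) as [h' | h']; [| contradiction].
  now rewrite (Peano_dec.le_unique _ _ h h').
Qed.

Lemma vfst_vjoin {q q'} (u : Rvec q) (v : Rvec q') : vfst (vjoin u v) = u.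
Proof.
  apply functional_extensionality; intros [n h]; unfold vfst, vjoin; simpl.
  rewrite (vnth_val _ n (ltac:(lia) : (n < q + q')%nat)); simpl.
  destruct (lt_dec n q); [apply vnth_val | contradiction].
Qed.

Lemma vsnd_vjoin {q q'} (u : Rvec q) (v : Rvec q') : vsnd (vjoin u v) = v.
Proof.
  apply functional_extensionality; intros [n h]; unfold vsnd, vjoin; simpl.
  rewrite (vnth_val _ (q + n) (ltac:(lia) : (q + n < q + q')%nat)); simpl.
  destruct (lt_dec (q + n) q); [lia |].
  replace (q + n - q)%nat with n by lia; apply vnth_val.
Qed.

Section Product.

Variables (X Y : Type) (dX : X -> X -> R) (dY : Y -> Y -> R).

Let d := prod_dist dX dY.

Definition proj1_set (Z : X * Y -> Prop) (x : X) : Prop := exists y, Z (x, y).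
Definition proj2_set (Z : X * Y -> Prop) (y : Y) : Prop := exists x, Z (x, y).

Lemma covered_by_proj1_set Z n : covered_by d 1 Z n -> covered_by dX 1 (proj1_set Z) n.
Proof.
  intros [cs [Hlen Hcs]]; exists (map fst cs); rewrite length_map; split; [exact Hlen |].
  intros x [y Hxy]; destruct (Hcs _ Hxy) as [c [Hc Hball]].
  exists (fst c); split; [now apply in_map |].
  eapply Rle_trans; [apply Rmax_l | exact Hball].
Qed.

Lemma covered_by_proj2_set Z n : covered_by d 1 Z n -> covered_by dY 1 (proj2_set Z) n.
Proof.
  intros [cs [Hlen Hcs]]; exists (map snd cs); rewrite length_map; split; [exact Hlen |].
  intros y [x Hxy]; destruct (Hcs _ Hxy) as [c [Hc Hball]].
  exists (snd c); split; [now apply in_map |].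
  eapply Rle_trans; [apply Rmax_r | exact Hball].
Qed.

Lemma Cov1_finite_proj1_set Z : Cov1_finite d Z -> Cov1_finite dX (proj1_set Z).
Proof. intros [n Hn]; exists n; now apply covered_by_proj1_set. Qed.

Lemma Cov1_finite_proj2_set Z : Cov1_finite d Z -> Cov1_finite dY (proj2_set Z).
Proof. intros [n Hn]; exists n; now apply covered_by_proj2_set. Qed.

Lemma covered_by_prod A B m n :
  covered_by dX 1 A m -> covered_by dY 1 B n ->
  covered_by d 1 (fun p => A (fst p) /\ B (snd p)) (m * n).
Proof.
  intros [cs [Hm Hcs]] [ds [Hn Hds]]; exists (list_prod cs ds); split.
  - rewrite length_prod; now apply Nat.mul_le_mono.
  - intros [a b] [Ha Hb]; simpl in *.
    destruct (Hcs _ Ha) as [x [Hx Hax]], (Hds _ Hb) as [y [Hy Hby]].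
    exists (x, y); split; [now apply in_prod | now apply Rmax_lub].
Qed.

Lemma continuous_on_vjoin {q q'} Z (f : X -> Rvec q) (g : Y -> Rvec q') :
  continuous_on dX (proj1_set Z) f -> continuous_on dY (proj2_set Z) g ->
  continuous_on d Z (fun p => vjoin (f (fst p)) (g (snd p))).
Proof.
  intros Hf Hg [a b] Hab eps Heps.
  destruct (Hf a (ex_intro _ b Hab) eps Heps) as [df [Hdf Hcf]].
  destruct (Hg b (ex_intro _ a Hab) eps Heps) as [dg [Hdg Hcg]].
  exists (Rmin df dg); split; [now apply Rmin_pos |].
  intros [a' b'] Hab' Hd [n h]; unfold d, prod_dist in Hd; simpl in Hd.
  assert (Hda : dX a a' < df)
    by (eapply Rle_lt_trans; [apply Rmax_l | eapply Rlt_le_trans; [exact Hd | apply Rmin_l]]).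
  assert (Hdb : dY b b' < dg)
    by (eapply Rle_lt_trans; [apply Rmax_r | eapply Rlt_le_trans; [exact Hd | apply Rmin_r]]).
  unfold vjoin; simpl; destruct (lt_dec n q) as [hq | hq].
  - rewrite !(vnth_val _ n hq); exact (Hcf a' (ex_intro _ b' Hab') Hda _).
  - rewrite !(vnth_val _ (n - q) (ltac:(lia) : (n - q < q')%nat)).
    exact (Hcg b' (ex_intro _ a' Hab') Hdb _).
Qed.

Lemma fibre_vjoin_sub {q q'} Z (f : X -> Rvec q) (g : Y -> Rvec q') w p :
  fibre Z (fun p => vjoin (f (fst p)) (g (snd p))) w p ->
  fibre (proj1_set Z) f (vfst w) (fst p) /\ fibre (proj2_set Z) g (vsnd w) (snd p).
Proof.
  destruct p as [a b]; intros [Hab <-]; simpl.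
  rewrite vfst_vjoin, vsnd_vjoin.
  split; split; [exists b | | exists a |]; auto.
Qed.

Lemma TO_prod_le q q' Z : Cov1_finite d Z ->
  (TO d (q + q') Z <= TO dX q (proj1_set Z) * TO dY q' (proj2_set Z))%nat.
Proof.
  intros HZ.
  pose proof (Cov1_finite_proj1_set Z HZ) as HA.
  pose proof (Cov1_finite_proj2_set Z HZ) as HB.
  destruct (TO_attained _ dX q (proj1_set Z)) as [f [Hf <-]].
  destruct (TO_attained _ dY q' (proj2_set Z)) as [g [Hg <-]].
  eapply Nat.le_trans; [apply TO_le_Ov, (continuous_on_vjoin Z f g Hf Hg) |].
  apply Ov_le; [exact HZ |]; intros w.
  eapply covered_by_sub; [apply fibre_vjoin_sub | apply le_n |].
  apply covered_by_prod; now apply fibre_covered_by_Ov.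
Qed.

Lemma TOX_prod_le q q' r :
  (TOX d (q + q') r <= TOX dX q r * TOX dY q' r)%nat.
Proof.
  apply TOX_le; intros Z HZ Hr.
  assert (HA : (Cov1 dX (proj1_set Z) <= r)%nat)
    by (eapply Nat.le_trans; [apply Cov1_le, covered_by_proj1_set, Cov1_covered, HZ | exact Hr]).
  assert (HB : (Cov1 dY (proj2_set Z) <= r)%nat)
    by (eapply Nat.le_trans; [apply Cov1_le, covered_by_proj2_set, Cov1_covered, HZ | exact Hr]).
  eapply Nat.le_trans; [apply TO_prod_le, HZ |].
  apply Nat.mul_le_mono; apply TO_le_TOX; auto using Cov1_finite_proj1_set, Cov1_finite_proj2_set.
Qed.

End Product.

Theorem theorem1p8 (X Y : Type) (dX : X -> X -> R) (dY : Y -> Y -> R) (q q' : nat) :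
  is_metric dX -> is_metric dY ->
  bounded_geometry dX -> bounded_geometry dY ->
  (1 <= q)%nat -> (1 <= q')%nat ->
  exists C : nat, forall r : nat,
    (TOX (prod_dist dX dY) (q + q') r
       <= C * (TOX dX q (C * r) * TOX dY q' (C * r)) + C)%nat.
Proof.
  intros _ _ _ _ _ _; exists 1%nat; intros r; rewrite !Nat.mul_1_l.
  pose proof (TOX_prod_le X Y dX dY q q' r); lia.
Qed.
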